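(* For every integer $m\ge5$ and every $\alpha\in[0,1]$, selecting an arbitrary candidate from the matching uncovered set yields distortion at least $2.5+\alpha/2$ on $\alpha$-decisive metric spaces; that is, there exist an election with $m$ candidates, an $\alpha$-decisive distance function $d$ consistent with it, and a candidate $a$ in its matching uncovered set such that $\mathrm{SC}(a)\ge(2.5+\alpha/2)\min_{c\in C}\mathrm{SC}(c)$.
   Context: An election: voters $V$, a finite set $C$ of $m$ candidates, a profile of linear orders $\sigma_i$ over $C$; $a\succeq_i c$ means $a=c$ or $i$ ranks $a$ above $c$; $\mathrm{top}(i)$ is $i$'s first choice. A distance function $d$ on $V\cup C$ is nonnegative, symmetric and satisfies the triangle inequality (co-location allowed); it is consistent with $\sigma$ if $d(i,c)\le d(i,c')$ whenever $i$ ranks $c$ above $c'$; it is $\alpha$-decisive if $d(i,\mathrm{top}(i))\le\alpha\,d(i,c)$ for all $i$ and $c\ne\mathrm{top}(i)$. $\mathrm{SC}(c)=\sum_i d(i,c)$. The separation graph $G(a,b)$ is the bipartite graph with both sides copies of $V$ and edge $(i,j)$ iff some $c\in C$ satisfies $a\succeq_i c$ and $c\succeq_j b$. The matching uncovered set is the set of $a$ such that $G(a,b)$ has a perfect matching for every $b\in C$. *)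

From HB Require Import structures.
From mathcomp Require Import all_boot all_order all_algebra.
From mathcomp Require Import fingroup perm.
From mathcomp Require Import reals.
Set Implicit Arguments. Unset Strict Implicit. Unset Printing Implicit Defensive.
Import Order.TTheory GRing.Theory Num.Theory.
Local Open Scope ring_scope.

(* The profile assigns to
   each voter i a permutation [pos i]; [pos i c] is the position of candidate
   c in voter i's ranking (position 0 = first choice). *)

Definition prefers n m (pos : 'I_n -> {perm 'I_m}) (i : 'I_n) (a c : 'I_m) : Prop :=
  (pos i a < pos i c)%N.

Definition prefers_eq n m (pos : 'I_n -> {perm 'I_m}) (i : 'I_n) (a c : 'I_m) : Prop :=
  a = c \/ prefers pos i a c.

Definition is_top n m (pos : 'I_n -> {perm 'I_m}) (i : 'I_n) (t : 'I_m) : Prop :=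
  forall c, prefers_eq pos i t c.

Definition point n m := ('I_n + 'I_m)%type.

(* pseudometric on V u C (co-location allowed) *)
Definition is_distance (R : realType) n m (d : point n m -> point n m -> R) : Prop :=
  (forall x, d x x = 0) /\
  (forall x y, 0 <= d x y) /\
  (forall x y, d x y = d y x) /\
  (forall x y z, d x z <= d x y + d y z).

Definition consistent (R : realType) n m (pos : 'I_n -> {perm 'I_m})
  (d : point n m -> point n m -> R) : Prop :=
  forall i c c', prefers pos i c c' -> d (inl i) (inr c) <= d (inl i) (inr c').

Definition decisive (R : realType) n m (pos : 'I_n -> {perm 'I_m})
  (d : point n m -> point n m -> R) (alpha : R) : Prop :=
  forall i t c, is_top pos i t -> c <> t ->
    d (inl i) (inr t) <= alpha * d (inl i) (inr c).

Definition SC (R : realType) n m (d : point n m -> point n m -> R) (c : 'I_m) : R :=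
  \sum_(i < n) d (inl i) (inr c).

Definition sep_edge n m (pos : 'I_n -> {perm 'I_m}) (a b : 'I_m) (i j : 'I_n) : Prop :=
  exists c, prefers_eq pos i a c /\ prefers_eq pos j c b.

Definition has_perfect_matching n m (pos : 'I_n -> {perm 'I_m}) (a b : 'I_m) : Prop :=
  exists f : {perm 'I_n}, forall i, sep_edge pos a b i (f i).

Definition matching_uncovered n m (pos : 'I_n -> {perm 'I_m}) (a : 'I_m) : Prop :=
  forall b, has_perfect_matching pos a b.

(** Three voters suffice.  Only voter-candidate distances have to be given:
    a nonnegative table satisfying the quadrilateral inequality
    [D i c' <= D i c + D j c + D j c'] extends to a pseudometric, by taking
    sup-distances between rows (voter to voter) and between columns
    (candidate to candidate).  Listing each voter's distances along the
    voter's ranking turns consistency into sortedness and decisiveness into a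
    condition on the first entry.  The distances are chosen so that the
    optimal candidate has social cost 1 while the candidate [a] has social
    cost [5/2 + alpha/2]; yet [a] is matching-uncovered, since for every [b]
    either the identity or a cyclic shift of the three voters is a perfect
    matching of [G(a, b)]. *)

From HB Require Import structures.
From mathcomp Require Import all_boot all_order all_algebra.
From mathcomp Require Import fingroup perm.
From mathcomp Require Import reals.
From mathcomp Require Import lra.
Set Implicit Arguments. Unset Strict Implicit. Unset Printing Implicit Defensive.
Import Order.TTheory GRing.Theory Num.Theory.
Local Open Scope ring_scope.

Section BipartiteExtension.
Variables (R : realType) (n m : nat) (D : 'I_n -> 'I_m -> R).

Definition bip_dist (x y : point n m) : R :=
  match x, y with
  | inl i, inl j => \big[Num.max/0]_c `|D i c - D j c|
  | inr c, inr c' => \big[Num.max/0]_i `|D i c - D i c'|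
  | inl i, inr c | inr c, inl i => D i c
  end.

Lemma le_bip_dist_voters i j c : `|D i c - D j c| <= bip_dist (inl i) (inl j).
Proof. exact: le_bigmax. Qed.

Lemma le_bip_dist_candidates i c c' : `|D i c - D i c'| <= bip_dist (inr c) (inr c').
Proof. exact: le_bigmax. Qed.

Hypotheses (D_ge0 : forall i c, 0 <= D i c)
  (D_quad : forall i j c c', D i c' <= D i c + D j c + D j c').

Lemma bip_dist_ge0 x y : 0 <= bip_dist x y.
Proof. by case: x y => [i|c] [j|c'] //=; exact: bigmax_ge_id. Qed.

Lemma bip_dist_triangle x y z : bip_dist x z <= bip_dist x y + bip_dist y z.
Proof.
case: x y z => [i|c] [j|c'] [k|c''] /=.
- apply: bigmax_le => [|c _]; first by rewrite addr_ge0 ?bigmax_ge_id.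
  apply: le_trans (ler_distD (D j c) _ _) _.
  by rewrite lerD ?le_bip_dist_voters.
- by move: (le_bip_dist_voters i j c'') => /= /ler_normlP[]; lra.
- apply: bigmax_le => [|c _]; first by rewrite addr_ge0.
  apply/ler_normlP; split; have := D_quad i k c' c; have := D_quad k i c' c; lra.
- by move: (le_bip_dist_candidates i c' c'') => /= /ler_normlP[]; lra.
- by move: (le_bip_dist_voters j k c) => /= /ler_normlP[]; lra.
- apply: bigmax_le => [|i _]; first by rewrite addr_ge0.
  apply/ler_normlP; split; have := D_quad i j c c''; have := D_quad i j c'' c; lra.
- by move: (le_bip_dist_candidates k c c') => /= /ler_normlP[]; lra.
- apply: bigmax_le => [|i _]; first by rewrite addr_ge0 ?bigmax_ge_id.
  apply: le_trans (ler_distD (D i c') _ _) _.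
  by rewrite lerD ?le_bip_dist_candidates.
Qed.

Lemma bip_dist_is_distance : is_distance bip_dist.
Proof.
have dist_xx x : bip_dist x x = 0.
  apply/eqP; rewrite eq_le bip_dist_ge0 andbT.
  by case: x => [i|c]; apply: bigmax_le => // k _; rewrite subrr normr0.
have dist_sym x y : bip_dist x y = bip_dist y x.
  by case: x y => [i|c] [j|c'] //=; apply: eq_bigr => ? _; rewrite distrC.
exact: (conj dist_xx (conj bip_dist_ge0 (conj dist_sym bip_dist_triangle))).
Qed.

End BipartiteExtension.

(* Candidates outside the ranking [s] keep their own index, so they come
   after all of [s], in index order. *)
Definition rank_in (s : seq nat) (c : nat) : nat := if c \in s then index c s else c.

Section RankingPerm.
Variables (N : nat) (s : seq nat).
Hypotheses (s_perm : perm_eq s (iota 0 (size s))) (s_size : (size s <= N)%N).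

Lemma mem_ranking c : (c \in s) = (c < size s)%N.
Proof. by rewrite (perm_mem s_perm) mem_iota. Qed.

Lemma rank_in_inj : injective (rank_in s).
Proof.
have out_ge c : c \notin s -> (size s <= c)%N by rewrite mem_ranking -leqNgt.
move=> c c'; rewrite /rank_in; case: ifPn => cs; case: ifPn => c's //.
- by move/(congr1 (nth 0 s)); rewrite !nth_index.
- by move=> eq_c; have := out_ge _ c's; rewrite -eq_c leqNgt index_mem cs.
- by move=> eq_c; have := out_ge _ cs; rewrite eq_c leqNgt index_mem c's.
Qed.

Lemma rank_in_ltn (c : 'I_N) : (rank_in s c < N)%N.
Proof.
rewrite /rank_in; case: ifPn => // cs.
by rewrite (leq_trans _ s_size) // index_mem.
Qed.

Definition ranking_fun (c : 'I_N) : 'I_N := Ordinal (rank_in_ltn c).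

Lemma ranking_fun_inj : injective ranking_fun.
Proof. by move=> c c' /(congr1 val) /rank_in_inj /val_inj. Qed.

Definition ranking_perm : {perm 'I_N} := perm ranking_fun_inj.

Lemma ranking_permE c : ranking_perm c = rank_in s c :> nat.
Proof. by rewrite permE. Qed.

End RankingPerm.

Lemma nth_sorted_rcons_homo (R : numDomainType) (x0 : R) (s : seq R) :
  sorted <=%R (rcons s x0) -> {homo nth x0 s : k l / (k <= l)%N >-> k <= l}.
Proof.
move=> s_sorted k l le_kl; rewrite -!(nth_rcons_default x0 s).
have nth_min j : nth x0 (rcons s x0) j = nth x0 (rcons s x0) (minn j (size s)).
  rewrite !nth_rcons; case: (ltnP j (size s)) => [lt_js | _]; first by rewrite lt_js.
  by rewrite ltnn eqxx; case: (_ == _).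
rewrite [X in X <= _]nth_min [X in _ <= X]nth_min.
apply: (sorted_leq_nth le_trans lexx) => //;
  rewrite ?unfold_in /= ?size_rcons ?ltnS ?geq_minr //.
by rewrite leq_min geq_minr andbT (leq_trans (geq_minl _ _) le_kl).
Qed.

Section RankTable.
Variables (R : realType) (n m : nat) (pos : 'I_n -> {perm 'I_m}).
Variables (row : 'I_n -> seq R) (dfar : R).

Definition rank_table (i : 'I_n) (c : 'I_m) : R := nth dfar (row i) (pos i c).

Lemma rank_table_consistent :
  (forall i, sorted <=%R (rcons (row i) dfar)) -> consistent pos (bip_dist rank_table).
Proof. by move=> sorted_row i c c' /ltnW; apply: nth_sorted_rcons_homo. Qed.

Lemma is_top_pos0 i t : is_top pos i t -> pos i t = 0%N :> nat.
Proof.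
have m_gt0 : (0 < m)%N by apply: leq_ltn_trans (ltn_ord t).
move/(_ ((pos i)^-1 (Ordinal m_gt0))%g) => [-> | ]; first by rewrite permKV.
by rewrite /prefers permKV.
Qed.

Lemma rank_table_decisive alpha :
  (forall i k, (0 < k)%N -> nth dfar (row i) 0 <= alpha * nth dfar (row i) k) ->
  decisive pos (bip_dist rank_table) alpha.
Proof.
move=> top_row i t c /is_top_pos0 top_t neq_ct; rewrite /= /rank_table top_t.
apply: top_row; rewrite lt0n; apply: contra_notN neq_ct.
by rewrite -top_t => /eqP /val_inj /perm_inj.
Qed.

End RankTable.

Lemma identity_matching n m (pos : 'I_n -> {perm 'I_m}) a b :
  (forall i, prefers_eq pos i a b) -> has_perfect_matching pos a b.
Proof. by move=> ab; exists 1%g => i; exists b; rewrite perm1; split; [|left]. Qed.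

Definition shift_perm n (k : 'I_n.+1) : {perm 'I_n.+1} := perm (addrI k).

Section LowerBoundElection.
Variables (R : realType) (alpha : R) (mm : nat).
Hypothesis alpha01 : 0 <= alpha <= 1.
Local Notation m := mm.+4.+1.

(* Candidates 0, 1, 2, 3, 4 play the roles of c*, a, z, y, w; all remaining
   candidates are at distance 2 from every voter. *)
Definition ranking (i : nat) : seq nat :=
  match i with
  | 0 => [:: 0; 2; 3; 1; 4]
  | 1 => [:: 2; 1; 0; 3; 4]
  | _ => [:: 3; 4; 0; 1; 2]
  end.

Definition dist_by_rank (i : nat) : seq R :=
  match i with
  | 0 => [:: 0; 1/2 + alpha/2; 1/2 + alpha/2; 1; 1]
  | 1 => [:: alpha/2; 1/2; 1/2; 1 + alpha/2; 3/2]
  | _ => [:: alpha/2; 1/2; 1/2; 1 + alpha/2; 1 + alpha/2]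
  end.

Lemma ranking_perm_eq i : perm_eq (ranking i) (iota 0 (size (ranking i))).
Proof. by case: i => [|[|i]]. Qed.

Lemma size_ranking i : (size (ranking i) <= m)%N.
Proof. by case: i => [|[|i]]. Qed.

Definition profile (i : 'I_3) : {perm 'I_m} :=
  ranking_perm (ranking_perm_eq i) (size_ranking i).

Definition table : 'I_3 -> 'I_m -> R := rank_table profile (fun i => dist_by_rank i) 2.

Lemma tableE i c : table i c = nth 2 (dist_by_rank i) (rank_in (ranking i) c).
Proof. by rewrite /table /rank_table ranking_permE. Qed.

Lemma table_ge0 i c : 0 <= table i c.
Proof.
have /andP[a0 a1] := alpha01.
rewrite tableE; case: i c => [[|[|[|i]]] Hi] // [[|[|[|[|[|k]]]]] Hc] /=;
  rewrite ?nth_nil; lra.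
Qed.

Lemma table_quad i j c c' : table i c' <= table i c + table j c + table j c'.
Proof.
have /andP[a0 a1] := alpha01.
rewrite !tableE.
case: i j c c' => [[|[|[|i]]] Hi] // [[|[|[|j]]] Hj] //
  [[|[|[|[|[|k]]]]] Hc] [[|[|[|[|[|k']]]]] Hc'] /=; rewrite ?nth_nil; lra.
Qed.

Definition dist : point 3 m -> point 3 m -> R := bip_dist table.

Lemma dist_is_distance : is_distance dist.
Proof. exact: bip_dist_is_distance table_ge0 table_quad. Qed.

Lemma profile_consistent : consistent profile dist.
Proof.
have /andP[a0 a1] := alpha01.
apply: rank_table_consistent => -[[|[|[|i]]] Hi] //=; rewrite !andbT;
  repeat (apply/andP; split); lra.
Qed.

Lemma profile_decisive : decisive profile dist alpha.
Proof.
have /andP[a0 a1] := alpha01.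
apply: rank_table_decisive => -[[|[|[|i]]] Hi] // [|[|[|[|[|[|k]]]]]] //= _;
  rewrite ?nth_nil; nra.
Qed.

Lemma prefers_eq_profile (i : 'I_3) (x y : 'I_m) :
  (x == y :> nat) || (rank_in (ranking i) x < rank_in (ranking i) y)%N ->
  prefers_eq profile i x y.
Proof.
case/orP=> [/eqP/val_inj -> | lt_xy]; [by left | right].
by rewrite /prefers !ranking_permE.
Qed.

Lemma matching_uncovered_a : matching_uncovered profile (inord 1).
Proof.
case=> [[|[|[|[|[|k]]]]] Hb].
- exists (shift_perm 2) => -[[|[|[|i]]] Hi] //; rewrite permE;
    [exists (inord 4) | exists (inord 0) | exists (inord 1)];
    by split; apply: prefers_eq_profile; rewrite !inordK.
- by apply: identity_matching => i; apply: prefers_eq_profile; rewrite inordK.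
- exists (shift_perm 2) => -[[|[|[|i]]] Hi] //; rewrite permE;
    [exists (inord 1) | exists (inord 0) | exists (inord 2)];
    by split; apply: prefers_eq_profile; rewrite !inordK.
- exists (shift_perm 1) => -[[|[|[|i]]] Hi] //; rewrite permE;
    [exists (inord 1) | exists (inord 3) | exists (inord 2)];
    by split; apply: prefers_eq_profile; rewrite !inordK.
- exists (shift_perm 2) => -[[|[|[|i]]] Hi] //; rewrite permE;
    [exists (inord 4) | exists (inord 0) | exists (inord 1)];
    by split; apply: prefers_eq_profile; rewrite !inordK.
- apply: identity_matching => -[[|[|[|i]]] Hi] //;
  by apply: prefers_eq_profile; rewrite inordK.
Qed.

Lemma SC_dist c : SC dist c = table 0 c + table 1 c + table 2 c.
Proof. by rewrite /SC !big_ord_recl big_ord0 addr0 addrA. Qed.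

Lemma SC_opt : SC dist (inord 0) = 1.
Proof. rewrite SC_dist !tableE inordK //=; lra. Qed.

Lemma SC_a : SC dist (inord 1) = 5 / 2 + alpha / 2.
Proof. rewrite SC_dist !tableE inordK //=; lra. Qed.

Lemma SC_ge1 c : 1 <= SC dist c.
Proof.
have /andP[a0 a1] := alpha01.
rewrite SC_dist !tableE; case: c => [[|[|[|[|[|k]]]]] Hc] /=; rewrite ?nth_nil; lra.
Qed.

End LowerBoundElection.

Theorem proposition2 (R : realType) (m : nat) (alpha : R) :
  (5 <= m)%N -> 0 <= alpha <= 1 ->
  exists (n : nat) (pos : 'I_n -> {perm 'I_m})
         (d : point n m -> point n m -> R) (a c0 : 'I_m),
    [/\ is_distance d, consistent pos d & decisive pos d alpha] /\
    matching_uncovered pos a /\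
    [/\ (forall c, SC d c0 <= SC d c), 0 < SC d c0 &
        (5%:R / 2%:R + alpha / 2%:R) * SC d c0 <= SC d a].
Proof.
case: m => [|[|[|[|[|mm]]]]] // _ alpha01.
exists 3%N, (profile mm), (@dist R alpha mm), (inord 1), (inord 0); split; [|split].
- split; [exact: dist_is_distance | exact: profile_consistent | exact: profile_decisive].
- exact: matching_uncovered_a.
- rewrite SC_opt SC_a mulr1; split => [c|//|]; [exact: SC_ge1 | lra].
Qed.
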